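(* Let $C=w_1-\dots-w_m$ be a chain with positive weights and let $C=C_1-\dots-C_{p+1}$ be a decomposition of $C$ (given by $0=i_0<i_1<\dots<i_p<i_{p+1}=m$) into subchains each of which is extremal. If the gluing conditions $$\Delta_j\ge 0\ \text{for all } j \text{ with } i_j \text{ odd},\qquad \Delta_j\le 0\ \text{for all } j\text{ with } i_j\text{ even}$$ hold ($1\le j\le p$), then $L_1(C)=\sum_{j=1}^{p+1}L_1(C_j)=\sum_{j=1}^{p+1}L_\emptyset(C_j)$.
   Context: For a chain $C'=v_1-\dots-v_r$ with $r\ge 2$ edges and positive weights: $L_1(C')=\max\{\sum_{i=1}^r v_ix_i : x\in\mathbb{R}^r,\ x_i^2+x_{i+1}^2\le 1\ \forall\,1\le i\le r-1\}$; $L_\emptyset(C')=\sqrt{(\sum_{i\text{ odd}}v_i)^2+(\sum_{i\text{ even}}v_i)^2}$; $C'$ is extremal if $L_1(C')=L_\emptyset(C')$ (extremality is only defined for chains with at least two edges). The subchains are $C_j=w_{i_{j-1}+1}-\dots-w_{i_j}$. Let $\tilde\Sigma_{\rm odd}(C_j)=\sum\{w_i : i_{j-1}<i\le i_j,\ i\text{ odd}\}$, $\tilde\Sigma_{\rm even}(C_j)=\sum\{w_i : i_{j-1}<i\le i_j,\ i\text{ even}\}$ (parity with respect to the numbering in $C$), and $\Delta_j=\tilde\Sigma_{\rm even}(C_j)\tilde\Sigma_{\rm odd}(C_{j+1})-\tilde\Sigma_{\rm even}(C_{j+1})\tilde\Sigma_{\rm odd}(C_j)$ for $1\le j\le p$.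 *)

From mathcomp Require Import all_boot all_order all_algebra.
From mathcomp Require Import classical_sets reals.
Set Implicit Arguments. Unset Strict Implicit. Unset Printing Implicit Defensive.
Import Order.TTheory GRing.Theory Num.Theory.
Local Open Scope ring_scope.
Local Open Scope classical_set_scope.

(* A chain v_1 - ... - v_r is represented by its weight list v : seq R;
   v_i (1-based) is v`_(i-1) (0-based). *)

Definition feasible (R : realType) (r : nat) (x : nat -> R) : Prop :=
  forall i : nat, (i.+1 < r)%N -> x i ^+ 2 + x i.+1 ^+ 2 <= 1.

(* L_1(C') = max { sum_i v_i x_i : x feasible } (taken as the supremum,
   which is attained for r >= 2). *)
Definition L1 (R : realType) (v : seq R) : R :=
  sup [set y : R | exists x : nat -> R,
        feasible (size v) x /\ y = \sum_(i < size v) v`_i * x i].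

(* 1-based index i+1 is odd iff 0-based index i is even. *)
Definition sum_odd1 (R : realType) (v : seq R) : R :=
  \sum_(i < size v | ~~ odd i) v`_i.
Definition sum_even1 (R : realType) (v : seq R) : R :=
  \sum_(i < size v | odd i) v`_i.

Definition Lempty (R : realType) (v : seq R) : R :=
  Num.sqrt (sum_odd1 v ^+ 2 + sum_even1 v ^+ 2).

Definition extremal (R : realType) (v : seq R) : Prop :=
  (2 <= size v)%N /\ L1 v = Lempty v.

(* subchain w_{a+1} - ... - w_b of w (1-based numbering) *)
Definition subchain (R : realType) (w : seq R) (a b : nat) : seq R :=
  take (b - a) (drop a w).

(* tilde-Sigma_odd / tilde-Sigma_even of the subchain w_{a+1}..w_b, parity
   taken w.r.t. the numbering in the whole chain (1-based index k+1). *)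
Definition tsig_odd (R : realType) (w : seq R) (a b : nat) : R :=
  \sum_(a <= k < b | ~~ odd k) w`_k.
Definition tsig_even (R : realType) (w : seq R) (a b : nat) : R :=
  \sum_(a <= k < b | odd k) w`_k.

(* Delta_j for the decomposition given by i : nat -> nat,
   C_j = w_{i_{j-1}+1} .. w_{i_j}. *)
Definition Delta (R : realType) (w : seq R) (i : nat -> nat) (j : nat) : R :=
  tsig_even w (i j.-1) (i j) * tsig_odd w (i j) (i j.+1)
  - tsig_even w (i j) (i j.+1) * tsig_odd w (i j.-1) (i j).

From mathcomp Require Import all_boot all_order all_algebra.
From mathcomp Require Import reals.
From mathcomp Require Import zify ring lra.
Import Order.TTheory GRing.Theory Num.Theory.
Local Open Scope ring_scope.

Set Implicit Arguments. Unset Strict Implicit.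

(* Restricting a feasible point of C to the blocks C_j gives
   L_1(C) <= sum_j L_1(C_j).  Conversely, on the block C_j put
   x_k = Sigma_odd(C_j)/N_j at odd and x_k = Sigma_even(C_j)/N_j at even
   positions k (parity in the numbering of C), where N_j = L_empty(C_j).
   Inside a block consecutive squares add up to 1 and the value of x is
   sum_j N_j.  Across the boundary between C_j and C_(j+1) the constraint
   reads (Sigma_odd(C_j)/N_j)^2 + (Sigma_even(C_(j+1))/N_(j+1))^2 <= 1 (or
   the same with odd and even exchanged, according to the parity of i_j),
   which after clearing denominators is the sign condition on Delta_j.
   Extremality identifies N_j with L_1(C_j). *)

Section FeasiblePoints.
Variable R : realType.

Lemma feasible_sqr_le1 (r : nat) (x : nat -> R) (l : nat) :
  (2 <= r)%N -> feasible r x -> (l < r)%N -> x l ^+ 2 <= 1.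
Proof.
move=> r2 hx hl; case: (ltnP l.+1 r) => hl1.
  by have := hx l hl1; have := sqr_ge0 (x l.+1); lra.
case: l hl hl1 => [|m] hl hl1; first lia.
by have := hx m hl; have := sqr_ge0 (x m); lra.
Qed.

Lemma feasible_restrict (r a s : nat) (x : nat -> R) :
  (a + s <= r)%N -> feasible r x -> feasible s (fun l => x (a + l)%N).
Proof. by move=> hs hx l hl; rewrite addnS; apply: hx; lia. Qed.

Lemma value_le_L1 (v : seq R) (x : nat -> R) :
  (2 <= size v)%N -> feasible (size v) x ->
  \sum_(k < size v) v`_k * x k <= L1 v.
Proof.
move=> v2 hx; apply: sup_upper_bound; last by exists x.
split; first by exists (\sum_(k < size v) v`_k * x k), x.
exists (\sum_(k < size v) (v`_k ^+ 2 + 1) / 2) => _ [z [hz ->]].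
apply: ler_sum => k _.
by have := feasible_sqr_le1 v2 hz (ltn_ord k); have := sqr_ge0 (v`_k - z k); nra.
Qed.

Lemma L1_le (v : seq R) (B : R) :
  (forall x, feasible (size v) x -> \sum_(k < size v) v`_k * x k <= B) ->
  L1 v <= B.
Proof.
move=> hB; apply: ge_sup; last by move=> _ [x [hx ->]]; exact: hB.
exists 0, (fun=> 0); split; first by move=> k _; rewrite expr0n /= addr0 ler01.
by rewrite big1 // => k _; rewrite mulr0.
Qed.

End FeasiblePoints.

Definition tsig_norm (R : realType) (w : seq R) (a b : nat) : R :=
  Num.sqrt (tsig_odd w a b ^+ 2 + tsig_even w a b ^+ 2).

Definition unit_weight (R : realType) (w : seq R) (a b k : nat) : R :=
  (if odd k then tsig_even w a b else tsig_odd w a b) / tsig_norm w a b.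

Lemma glue_sqr_le1 (R : rcfType) (o1 e1 o2 e2 : R) :
  0 < o1 -> 0 < e1 -> 0 < o2 -> 0 < e2 -> e2 * o1 <= e1 * o2 ->
  (o1 / Num.sqrt (o1 ^+ 2 + e1 ^+ 2)) ^+ 2 +
  (e2 / Num.sqrt (o2 ^+ 2 + e2 ^+ 2)) ^+ 2 <= 1.
Proof.
move=> o1_gt0 e1_gt0 o2_gt0 e2_gt0 hle.
have n1_gt0 : 0 < o1 ^+ 2 + e1 ^+ 2 by rewrite ltr_wpDr ?sqr_ge0 ?exprn_gt0.
have n2_gt0 : 0 < o2 ^+ 2 + e2 ^+ 2 by rewrite ltr_wpDr ?sqr_ge0 ?exprn_gt0.
rewrite !expr_div_n !sqr_sqrtr ?addr_ge0 ?sqr_ge0 //.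
have -> : o1 ^+ 2 / (o1 ^+ 2 + e1 ^+ 2) + e2 ^+ 2 / (o2 ^+ 2 + e2 ^+ 2) =
    1 - ((e1 * o2) ^+ 2 - (e2 * o1) ^+ 2) /
        ((o1 ^+ 2 + e1 ^+ 2) * (o2 ^+ 2 + e2 ^+ 2)).
  by field; rewrite !gt_eqF.
rewrite gerBl divr_ge0 //; last by rewrite mulr_ge0 ?ltW.
by rewrite subr_ge0 ler_sqr ?nnegrE ?mulr_ge0 // ltW.
Qed.

Section Subchains.
Variables (R : realType) (w : seq R).

Lemma size_subchain (a b : nat) :
  (b <= size w)%N -> size (subchain w a b) = (b - a)%N.
Proof. by move=> hb; rewrite size_take size_drop; case: ifP; lia. Qed.

Lemma nth_subchain (a b l : nat) :
  (l < b - a)%N -> (subchain w a b)`_l = w`_(a + l).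
Proof. by move=> hl; rewrite nth_take // nth_drop. Qed.

Lemma big_subchain (a b : nat) (F : nat -> R -> R) (P : pred nat) :
  (a <= b <= size w)%N ->
  \sum_(l < size (subchain w a b) | P l) F l (subchain w a b)`_l =
  \sum_(a <= k < b | P (k - a)%N) F (k - a)%N w`_k.
Proof.
move=> /andP[ab bw].
rewrite [RHS](_ : _ = \sum_(0 + a <= k < b | P (k - a)%N) F (k - a)%N w`_k) //.
rewrite big_addn big_mkord size_subchain //.
by apply: eq_big => [l|l _]; rewrite addnK // nth_subchain // addnC.
Qed.

Lemma value_subchain (a b : nat) (x : nat -> R) :
  (a <= b <= size w)%N ->
  \sum_(l < size (subchain w a b)) (subchain w a b)`_l * x (a + l)%N =
  \sum_(a <= k < b) w`_k * x k.
Proof.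
move=> hab; rewrite (big_subchain (fun l r => r * x (a + l)%N) xpredT) //.
by apply: eq_big_nat => k /andP[ak _]; rewrite subnKC.
Qed.

Lemma sum_odd1_subchain (a b : nat) : (a <= b <= size w)%N ->
  sum_odd1 (subchain w a b) = if odd a then tsig_even w a b else tsig_odd w a b.
Proof.
move=> hab; rewrite /sum_odd1 (big_subchain (fun _ r => r) (fun l => ~~ odd l)) //.
rewrite /tsig_even /tsig_odd; case: ifP => ha;
  rewrite big_nat_cond [RHS]big_nat_cond; apply: eq_bigl => k;
  case: (boolP (a <= k < b)%N) => //= /andP[ak _];
  by rewrite oddB // ha ?addbT ?addbF ?negbK.
Qed.

Lemma sum_even1_subchain (a b : nat) : (a <= b <= size w)%N ->
  sum_even1 (subchain w a b) = if odd a then tsig_odd w a b else tsig_even w a b.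
Proof.
move=> hab; rewrite /sum_even1 (big_subchain (fun _ r => r) (fun l => odd l)) //.
rewrite /tsig_even /tsig_odd; case: ifP => ha;
  rewrite big_nat_cond [RHS]big_nat_cond; apply: eq_bigl => k;
  case: (boolP (a <= k < b)%N) => //= /andP[ak _];
  by rewrite oddB // ha ?addbT ?addbF.
Qed.

Lemma Lempty_subchain (a b : nat) :
  (a <= b <= size w)%N -> Lempty (subchain w a b) = tsig_norm w a b.
Proof.
move=> hab; rewrite /Lempty sum_odd1_subchain // sum_even1_subchain //.
by rewrite /tsig_norm; case: odd => //; rewrite addrC.
Qed.

End Subchains.

Section UnitWeights.
Variables (R : realType) (w : seq R).

Lemma sum_alternating (a b : nat) (o e : R) :
  \sum_(a <= k < b) w`_k * (if odd k then e else o) =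
  o * tsig_odd w a b + e * tsig_even w a b.
Proof.
rewrite /tsig_odd /tsig_even !mulr_sumr !(big_mkcond (fun k => ~~ odd k))
  (big_mkcond (fun k => odd k)) -big_split /=.
by apply: eq_bigr => k _; case: odd; rewrite ?mulr0 ?add0r ?addr0 mulrC.
Qed.

Lemma sqr_tsig_norm (a b : nat) :
  tsig_norm w a b ^+ 2 = tsig_odd w a b ^+ 2 + tsig_even w a b ^+ 2.
Proof. by rewrite sqr_sqrtr // addr_ge0 ?sqr_ge0. Qed.

Lemma tsig_norm_gt0 (a b : nat) : 0 < tsig_odd w a b -> 0 < tsig_norm w a b.
Proof. by move=> o_gt0; rewrite sqrtr_gt0 ltr_pwDl ?sqr_ge0 ?exprn_gt0. Qed.

Lemma sum_unit_weight (a b : nat) : 0 < tsig_norm w a b ->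
  \sum_(a <= k < b) w`_k * unit_weight w a b k = tsig_norm w a b.
Proof.
move=> N_gt0; under eq_bigr do rewrite /unit_weight (fun_if (fun t => t / _)).
rewrite sum_alternating !(mulrAC _ (tsig_norm w a b)^-1) -mulrDl -!expr2.
by rewrite -sqr_tsig_norm expr2 mulfK ?gt_eqF.
Qed.

Lemma unit_weight_sqrS (a b k : nat) : 0 < tsig_norm w a b ->
  unit_weight w a b k ^+ 2 + unit_weight w a b k.+1 ^+ 2 = 1.
Proof.
move=> N_gt0; rewrite /unit_weight /= !expr_div_n -mulrDl.
rewrite (_ : _ + _ = tsig_norm w a b ^+ 2) ?divff ?expf_neq0 ?gt_eqF //.
by rewrite sqr_tsig_norm; case: odd; rewrite // addrC.
Qed.

Lemma unit_weight_glue (a b c k : nat) :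
  k.+1 = b ->
  0 < tsig_odd w a b -> 0 < tsig_even w a b ->
  0 < tsig_odd w b c -> 0 < tsig_even w b c ->
  (if odd b
   then 0 <= tsig_even w a b * tsig_odd w b c - tsig_even w b c * tsig_odd w a b
   else tsig_even w a b * tsig_odd w b c - tsig_even w b c * tsig_odd w a b <= 0) ->
  unit_weight w a b k ^+ 2 + unit_weight w b c k.+1 ^+ 2 <= 1.
Proof.
move=> <- o1_gt0 e1_gt0 o2_gt0 e2_gt0; rewrite /unit_weight /tsig_norm /=.
case: odd => /= hD.
  by rewrite !(addrC (tsig_odd _ _ _ ^+ 2)); apply: glue_sqr_le1 => //; lra.
by apply: glue_sqr_le1 => //; lra.
Qed.

End UnitWeights.

Section PositiveWeights.
Variables (R : realType) (w : seq R).
Hypothesis w_gt0 : forall k, (k < size w)%N -> 0 < w`_k.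

Lemma weight_ge0 (k : nat) : 0 <= w`_k.
Proof.
by case: (ltnP k (size w)) => hk; [exact/ltW/w_gt0 | rewrite nth_default].
Qed.

Lemma sum_weights_gt0 (P : pred nat) (a b k : nat) :
  (b <= size w)%N -> (a <= k < b)%N -> P k -> 0 < \sum_(a <= l < b | P l) w`_l.
Proof.
move=> bw kab Pk; rewrite lt0r psumr_neq0 => [|l _]; last exact: weight_ge0.
rewrite sumr_ge0 => [|l _]; last exact: weight_ge0.
by rewrite andbT; apply/hasP; exists k; rewrite ?mem_index_iota // Pk w_gt0 //; lia.
Qed.

Lemma tsig_odd_gt0 (a b : nat) :
  (a.+1 < b)%N -> (b <= size w)%N -> 0 < tsig_odd w a b.
Proof.
move=> ab bw; apply: (@sum_weights_gt0 _ _ _ (a + odd a)) => //.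
  by case: odd; rewrite ?addn0 ?addn1; lia.
by rewrite oddD oddb addbb.
Qed.

Lemma tsig_even_gt0 (a b : nat) :
  (a.+1 < b)%N -> (b <= size w)%N -> 0 < tsig_even w a b.
Proof.
move=> ab bw; apply: (@sum_weights_gt0 _ _ _ (a + ~~ odd a)) => //.
  by case: odd; rewrite ?addn0 ?addn1; lia.
by rewrite oddD oddb; case: odd.
Qed.

End PositiveWeights.

Section Decomposition.
Variables (R : realType) (w : seq R) (p : nat) (i : nat -> nat).
Hypothesis i0 : i 0 = 0%N.
Hypothesis i_last : i p.+1 = size w.
Hypothesis i_incr : forall j, (j <= p)%N -> (i j < i j.+1)%N.

Lemma block_mono (m n : nat) : (m <= n)%N -> (n <= p.+1)%N -> (i m <= i n)%N.
Proof.
elim: n => [|n IHn]; first by rewrite leqn0 => /eqP->.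
rewrite leq_eqVlt => /predU1P[-> // | mn np1].
exact: leq_trans (IHn mn (ltnW np1)) (ltnW (i_incr np1)).
Qed.

Lemma block_bounds (j : nat) :
  (1 <= j <= p.+1)%N -> (i j.-1 <= i j <= size w)%N.
Proof.
by move=> hj; rewrite -i_last !block_mono //; lia.
Qed.

Lemma big_blocks (F : nat -> R) :
  \sum_(0 <= k < size w) F k = \sum_(1 <= j < p.+2) \sum_(i j.-1 <= k < i j) F k.
Proof.
rewrite -i_last; elim: {-2}p.+1 (leqnn p.+1) => [|q IHq] qp1.
  by rewrite i0 !big_geq.
rewrite big_nat_recr //= -IHq 1?ltnW // (big_cat_nat _ (n := i q)) //.
exact: block_mono.
Qed.

Lemma block_of (k : nat) :
  (k < size w)%N -> exists2 j, (1 <= j <= p.+1)%N & (i j.-1 <= k < i j)%N.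
Proof.
rewrite -i_last; suff block_upto q :
    (k < i q)%N -> exists2 j, (1 <= j <= q)%N & (i j.-1 <= k < i j)%N.
  exact: block_upto.
elim: q => [|q IHq] hkq; first by rewrite i0 in hkq.
case: (ltnP k (i q)) => [/IHq[j hj hkj] | hqk]; first by exists j => //; lia.
by exists q.+1 => //=; rewrite hqk.
Qed.

Lemma block_unique (j j' k : nat) :
  (1 <= j <= p.+1)%N -> (1 <= j' <= p.+1)%N ->
  (i j.-1 <= k < i j)%N -> (i j'.-1 <= k < i j')%N -> j = j'.
Proof.
have block_lt m n : (n <= p.+1)%N -> (m < n)%N -> (i m <= i n.-1)%N.
  by move=> np1 mn; apply: block_mono; lia.
move=> hj hj' hk hk'; case: (ltngtP j j') => // [jj' | j'j].
- by have := block_lt j j' (proj2 (andP hj')) jj'; lia.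
- by have := block_lt j' j (proj2 (andP hj)) j'j; lia.
Qed.

Definition glued_point (k : nat) : R :=
  \sum_(1 <= j < p.+2 | (i j.-1 <= k < i j)%N) unit_weight w (i j.-1) (i j) k.

Lemma glued_point_block (j k : nat) : (1 <= j <= p.+1)%N ->
  (i j.-1 <= k < i j)%N -> glued_point k = unit_weight w (i j.-1) (i j) k.
Proof.
move=> hj hk; rewrite /glued_point big_nat_cond (eq_bigl (eq_op^~ j)).
  by rewrite big_nat1_eq ifT //; lia.
move=> j' /=; apply/andP/eqP => [[hj' hk'] | ->]; last by split=> //; lia.
by apply: block_unique hk' hk => //; lia.
Qed.

Hypothesis blocks_long :
  forall j, (1 <= j <= p.+1)%N -> (2 <= size (subchain w (i j.-1) (i j)))%N.

Lemma block_long (j : nat) : (1 <= j <= p.+1)%N -> ((i j.-1).+1 < i j)%N.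
Proof.
move=> hj; have /andP[_ ijw] := block_bounds hj.
by have := blocks_long hj; rewrite size_subchain //; lia.
Qed.

Lemma L1_le_sum_blocks :
  L1 w <= \sum_(1 <= j < p.+2) L1 (subchain w (i j.-1) (i j)).
Proof.
apply: L1_le => x hx; rewrite -(big_mkord xpredT (fun k => w`_k * x k)) big_blocks.
apply: ler_sum_nat => j hj; have hj' : (1 <= j <= p.+1)%N by lia.
rewrite -value_subchain ?block_bounds //.
apply: (value_le_L1 (x := fun l => x (i j.-1 + l)%N)); first exact: blocks_long.
by apply: feasible_restrict hx; rewrite size_subchain; have := block_bounds hj'; lia.
Qed.

Hypothesis w_gt0 : forall k, (k < size w)%N -> 0 < w`_k.
Hypothesis Delta_odd :
  forall j, (1 <= j <= p)%N -> odd (i j) -> 0 <= Delta w i j.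
Hypothesis Delta_even :
  forall j, (1 <= j <= p)%N -> ~~ odd (i j) -> Delta w i j <= 0.

Lemma block_tsig_odd_gt0 (j : nat) :
  (1 <= j <= p.+1)%N -> 0 < tsig_odd w (i j.-1) (i j).
Proof.
move=> hj; have /andP[_ ijw] := block_bounds hj.
exact: tsig_odd_gt0 (block_long hj) ijw.
Qed.

Lemma block_tsig_even_gt0 (j : nat) :
  (1 <= j <= p.+1)%N -> 0 < tsig_even w (i j.-1) (i j).
Proof.
move=> hj; have /andP[_ ijw] := block_bounds hj.
exact: tsig_even_gt0 (block_long hj) ijw.
Qed.

Lemma glued_point_feasible : feasible (size w) glued_point.
Proof.
move=> k hk; have [j hj hkj] := block_of (ltnW hk).
have N_gt0 := tsig_norm_gt0 (block_tsig_odd_gt0 hj).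
rewrite (glued_point_block hj hkj); case: (ltnP k.+1 (i j)) => hk1.
  by rewrite (glued_point_block (k := k.+1) hj) ?unit_weight_sqrS //; lia.
have ikj : i j = k.+1 by lia.
have jp : (j <= p)%N.
  rewrite leqNgt; apply/negP => pj; have jp1 : j = p.+1 by lia.
  by move: hk; rewrite -ikj jp1 i_last ltnn.
have hj1 : (1 <= j.+1 <= p.+1)%N by lia.
have hk1' : (i j.+1.-1 <= k.+1 < i j.+1)%N by rewrite /= -ikj leqnn i_incr.
rewrite (glued_point_block hj1 hk1') /=.
apply: (unit_weight_glue (esym ikj)); try exact: block_tsig_odd_gt0;
  try exact: block_tsig_even_gt0.
have hjp : (1 <= j <= p)%N by lia.
by case: ifP => [/(Delta_odd hjp) | /negbT/(Delta_even hjp)].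
Qed.

Lemma glued_point_value :
  \sum_(k < size w) w`_k * glued_point k =
  \sum_(1 <= j < p.+2) tsig_norm w (i j.-1) (i j).
Proof.
rewrite -(big_mkord xpredT (fun k => w`_k * glued_point k)) big_blocks.
apply: eq_big_nat => j hj; have hj' : (1 <= j <= p.+1)%N by lia.
rewrite -(sum_unit_weight (tsig_norm_gt0 (block_tsig_odd_gt0 hj'))).
by apply: eq_big_nat => k hk; rewrite (glued_point_block hj' hk).
Qed.

Lemma sum_tsig_norm_le_L1 :
  \sum_(1 <= j < p.+2) tsig_norm w (i j.-1) (i j) <= L1 w.
Proof.
rewrite -glued_point_value; apply: value_le_L1 glued_point_feasible.
have j1 : (1 <= 1 <= p.+1)%N by [].
by have := block_long j1; have := block_bounds j1; rewrite /= i0; lia.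
Qed.

End Decomposition.

Theorem mainTheorem10 (R : realType) (w : seq R) (p : nat) (i : nat -> nat) :
  (forall k : nat, (k < size w)%N -> 0 < w`_k) ->
  i 0%N = 0%N ->
  i p.+1 = size w ->
  (forall j : nat, (j <= p)%N -> (i j < i j.+1)%N) ->
  (forall j : nat, (1 <= j <= p.+1)%N -> extremal (subchain w (i j.-1) (i j))) ->
  (forall j : nat, (1 <= j <= p)%N -> odd (i j) -> 0 <= Delta w i j) ->
  (forall j : nat, (1 <= j <= p)%N -> ~~ odd (i j) -> Delta w i j <= 0) ->
  L1 w = \sum_(1 <= j < p.+2) L1 (subchain w (i j.-1) (i j)) /\
  \sum_(1 <= j < p.+2) L1 (subchain w (i j.-1) (i j))
    = \sum_(1 <= j < p.+2) Lempty (subchain w (i j.-1) (i j)).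
Proof.
move=> w_gt0 i0 i_last i_incr ext Delta_odd Delta_even.
have long j (hj : (1 <= j <= p.+1)%N) := (ext j hj).1.
have L1_block j : (1 <= j < p.+2)%N ->
    L1 (subchain w (i j.-1) (i j)) = tsig_norm w (i j.-1) (i j).
  by move=> hj; rewrite (ext j hj).2 Lempty_subchain // (block_bounds i0 i_last).
split; last by apply: eq_big_nat => j hj; rewrite (ext j hj).2.
apply/le_anti/andP; split; first exact: (L1_le_sum_blocks i0 i_last i_incr long).
rewrite (eq_big_nat _ _ L1_block).
exact: (sum_tsig_norm_le_L1 i0 i_last i_incr long w_gt0 Delta_odd Delta_even).
Qed.
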